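(* Let $\mathcal{C}$ be a 3XOR instance on variable set $\mathcal{X}$ and suppose every SOS refutation of $\mathcal{C}$ requires degree exceeding $r$ (i.e. a degree-$r$ pseudo-expectation operator for $\mathcal{C}$ exists). Then every SOS refutation of the statement ''$G_{\mathcal{C}}$ and $G_{\mathcal{C}^0}$ are isomorphic'' requires degree exceeding $r/3$.
   Context: A 3XOR instance $\mathcal{C}$ over $\mathcal{X}$ consists of equations $x_{j_1}+x_{j_2}+x_{j_3}=b$ over $\mathbb{Z}_2$ on three distinct variables; $\mathcal{C}^0$ replaces every right-hand side by $0$. Graph $G_{\mathcal{C}}$: for each variable $x$, two variable vertices $x\mapsto 0,x\mapsto 1$ joined by an edge; for each equation $C$ on $x_1,x_2,x_3$, four constraint vertices $\alpha_C$, one per satisfying assignment $\alpha=(x_1\mapsto a_1,x_2\mapsto a_2,x_3\mapsto a_3)$ of $C$, forming a clique, each adjacent to the variable vertices $x_i\mapsto a_i$; variable vertices are shared across constraints, constraint vertices are not. SOS for 3XOR: a degree-$r$ pseudo-expectation for $\mathcal{C}$ is a linear functional $\tilde{E}$ on real polynomials of degree at most $r$ in indeterminates $A[x\mapsto a]$ ($x\in\mathcal{X},a\in\mathbb{Z}_2$) with $\tilde{E}[1]=1$ and, for all polynomials $q$ with the product of degree at most $r$: $\tilde{E}[(A[x\mapsto a]^2-A[x\mapsto a])q]=0$; $\tilde{E}[(A[x\mapsto 0]+A[x\mapsto 1]-1)q]=0$; for each $C\in\mathcal{C}$ on $x_1,x_2,x_3$, $\tilde{E}[(\sum_{\alpha\text{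 satisfying }C}A[x_1\mapsto\alpha(x_1)]A[x_2\mapsto\alpha(x_2)]A[x_3\mapsto\alpha(x_3)]-1)q]=0$; and $\tilde{E}[p^2]\ge0$ for all $p$ of degree at most $r/2$. A degree-$r$ SOS refutation exists iff no such operator exists. SOS for isomorphism of $G,H$ ($|V(G)|=|V(H)|$, $|E(G)|=|E(H)|$): a degree-$r$ pseudo-expectation is a linear functional $\tilde{E}$ on polynomials of degree at most $r$ in indeterminates $\Pi[u\mapsto v]$ ($u\in V(G)$, $v\in V(H)$) with $\tilde{E}[1]=1$ and, for all polynomials with products of degree at most $r$: $\tilde{E}[(\Pi[u\mapsto v]^2-\Pi[u\mapsto v])q]=0$; $\tilde{E}[(\sum_{v}\Pi[u\mapsto v]-1)q]=0$ for each $u$ and $\tilde{E}[(\sum_u\Pi[u\mapsto v]-1)q]=0$ for each $v$; $\tilde{E}[(\sum_{\{u,u'\}\in E(G)}\sum_{v,v':\{v,v'\}\in E(H)}\Pi[u\mapsto v]\Pi[u'\mapsto v']-|E(G)|)p^2]\ge0$; $\tilde{E}[p^2]\ge 0$ for $\deg p\le r/2$. A degree-$r$ SOS refutation of isomorphism exists iff no such operator exists. *)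

From HB Require Import structures.
From mathcomp Require Import all_boot all_order all_algebra.
From mathcomp Require Import mpoly.
From mathcomp Require Import reals.

Set Implicit Arguments.
Unset Strict Implicit.
Unset Printing Implicit Defensive.

Import Order.TTheory GRing.Theory Num.Theory.
Local Open Scope ring_scope.

Definition polyT (R : nzRingType) (T : finType) := {mpoly R[#|T|]}.

Definition ind (R : nzRingType) (T : finType) (t : T) : polyT R T :=
  'X_(enum_rank t).

(* total degree (degree of 0 is 0) *)
Definition pdeg (R : nzRingType) (T : finType) (p : polyT R T) : nat :=
  (msize p).-1.

Definition linear_functional (R : nzRingType) (T : finType)
  (E : polyT R T -> R) : Prop :=
  forall (a : R) (p q : polyT R T), E (a *: p + q) = a * E p + E q.

(* An instance over variables X is a finite family of equations        *)
(* indexed by C: equation c is  x_{vars c 0} + x_{vars c 1} +          *)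
(* x_{vars c 2} = rhs c  over Z_2 (bool with addb).                    *)

Definition sat3 (b : bool) (alpha : {ffun 'I_3 -> bool}) : bool :=
  (alpha ord0 (+) alpha (@Ordinal 3 1 isT) (+) alpha (@Ordinal 3 2 isT)) == b.

Definition xor_poly (R : nzRingType) (X C : finType)
  (vars : C -> 'I_3 -> X) (rhs : C -> bool) (c : C) : polyT R (X * bool)%type :=
  \sum_(alpha : {ffun 'I_3 -> bool} | sat3 (rhs c) alpha)
     \prod_(i < 3) @ind R (X * bool)%type (vars c i, alpha i).

Definition xor_pseudo_exp (R : realType) (X C : finType)
  (vars : C -> 'I_3 -> X) (rhs : C -> bool) (r : nat)
  (E : polyT R (X * bool)%type -> R) : Prop :=
  let A := fun x a => @ind R (X * bool)%type (x, a) in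
  linear_functional E /\
      E 1 = 1 /\
      (forall x a (q : polyT R (X * bool)%type),
          leq (pdeg ((A x a ^+ 2 - A x a) * q)) r ->
          E ((A x a ^+ 2 - A x a) * q) = 0) /\
      (forall x (q : polyT R (X * bool)%type),
          leq (pdeg ((A x false + A x true - 1) * q)) r ->
          E ((A x false + A x true - 1) * q) = 0) /\
      (forall c (q : polyT R (X * bool)%type),
          leq (pdeg ((xor_poly R vars rhs c - 1) * q)) r ->
          E ((xor_poly R vars rhs c - 1) * q) = 0) /\
      (forall p : polyT R (X * bool)%type,
          leq (2 * pdeg p)%N r -> 0 <= E (p ^+ 2)).

Definition cvert (C : finType) (rhs : C -> bool) :=
  {p : (C * {ffun 'I_3 -> bool})%type | sat3 (rhs p.1) p.2}.

Definition gvert (X C : finType) (rhs : C -> bool) :=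
  ((X * bool) + cvert rhs)%type.

Definition gadj (X C : finType) (vars : C -> 'I_3 -> X) (rhs : C -> bool)
  (u v : gvert X rhs) : bool :=
  match u, v with
  | inl (x, a), inl (y, b) => (x == y) && (a != b)
  | inr s, inr t => ((sval s).1 == (sval t).1) && ((sval s).2 != (sval t).2)
  | inl (x, a), inr t =>
      [exists i : 'I_3, (vars (sval t).1 i == x) && ((sval t).2 i == a)]
  | inr s, inl (x, a) =>
      [exists i : 'I_3, (vars (sval s).1 i == x) && ((sval s).2 i == a)]
  end.

Definition rhs0 (C : finType) : C -> bool := fun _ => false.

(* A graph is given by a finite vertex type and a symmetric irreflexive*)
(* adjacency relation.  Indeterminates Pi[u |-> v] indexed by VG * VH. *)

Definition nedges (V : finType) (e : rel V) : nat :=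
  #|[set p : (V * V)%type | e p.1 p.2]|./2.

Definition iso_pseudo_exp (R : realType) (VG VH : finType)
  (eG : rel VG) (eH : rel VH) (r : nat)
  (E : polyT R (VG * VH)%type -> R) : Prop :=
  let Pi := fun u v => @ind R (VG * VH)%type (u, v) in
  (* sum over unordered edges {u,u'} of G and ordered (v,v') with {v,v'}
     an edge of H; over ordered pairs (u,u') each unordered edge of G is
     counted twice (the summand is symmetric under u <-> u'), hence 1/2 *)
  let S := 2%:R^-1 * \sum_(u : VG) \sum_(u' : VG | eG u u')
             \sum_(v : VH) \sum_(v' : VH | eH v v') Pi u v * Pi u' v' in
  linear_functional E /\
      E 1 = 1 /\
      (forall u v (q : polyT R (VG * VH)%type),
          leq (pdeg ((Pi u v ^+ 2 - Pi u v) * q)) r ->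
          E ((Pi u v ^+ 2 - Pi u v) * q) = 0) /\
      (forall u (q : polyT R (VG * VH)%type),
          leq (pdeg ((\sum_v Pi u v - 1) * q)) r ->
          E ((\sum_v Pi u v - 1) * q) = 0) /\
      (forall v (q : polyT R (VG * VH)%type),
          leq (pdeg ((\sum_u Pi u v - 1) * q)) r ->
          E ((\sum_u Pi u v - 1) * q) = 0) /\
      (forall p : polyT R (VG * VH)%type,
          leq (pdeg ((S - (nedges eG)%:R) * p ^+ 2)) r ->
          0 <= E ((S - (nedges eG)%:R) * p ^+ 2)) /\
      (forall p : polyT R (VG * VH)%type,
          leq (2 * pdeg p)%N r -> 0 <= E (p ^+ 2)).

(* An assignment [s] of the variables maps the vertices of [G_C] to those of
   [G_C0] by [x |-> a] => [x |-> a + s x] and [alpha_C] => [(alpha + s)_C];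
   this is an isomorphism exactly when [s] satisfies [C]. Replacing each
   indeterminate [Pi[u |-> v]] by the polynomial of degree at most 3 in the
   [A[x |-> a]] expressing "the map of [s] sends [u] to [v]" turns a degree-[r]
   pseudo-expectation for [C] into one for the isomorphism problem of degree
   [r / 3]. Squares stay squares, and modulo the Boolean, totality and 3XOR
   constraints every isomorphism constraint becomes a consequence of degree at
   most 6: rows and columns sum to [1] because the constraint vertices of an
   equation carry exactly its satisfying assignments, and an edge sent to a
   non-edge forces some variable to take both values. *)

From mathcomp Require Import all_boot all_order all_algebra.
From mathcomp Require Import mpoly.
From mathcomp Require Import reals.
From mathcomp Require Import zify ring.

Set Implicit Arguments.
Unset Strict Implicit.
Unset Printing Implicit Defensive.

Import Order.TTheory GRing.Theory Num.Theory.
Local Open Scope ring_scope.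

Section TotalDegree.
Variables (R : idomainType) (T : finType).
Implicit Types p q : polyT R T.

Lemma pdeg0 : pdeg (0 : polyT R T) = 0%N.
Proof. by rewrite /pdeg msize0. Qed.

Lemma pdeg1 : pdeg (1 : polyT R T) = 0%N.
Proof. by rewrite /pdeg msize1. Qed.

Lemma pdeg_ind (t : T) : pdeg (ind R t) = 1%N.
Proof. by rewrite /pdeg /ind msizeX mdeg1. Qed.

Lemma pdegN p : pdeg (- p) = pdeg p.
Proof. by rewrite /pdeg msizeN. Qed.

Lemma pdegM p q : p != 0 -> q != 0 -> pdeg (p * q)%R = (pdeg p + pdeg q)%N.
Proof.
move=> p_neq0 q_neq0; rewrite /pdeg msizeM //.
have := msize_poly_eq0 p; have := msize_poly_eq0 q.
rewrite (negbTE p_neq0) (negbTE q_neq0).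
by case: (msize q) => // b _; case: (msize p) => // a _ /=; lia.
Qed.

Lemma pdegM_le p q : (pdeg (p * q)%R <= pdeg p + pdeg q)%N.
Proof.
have [->|p_neq0] := eqVneq p 0; first by rewrite mul0r pdeg0.
have [->|q_neq0] := eqVneq q 0; first by rewrite mulr0 pdeg0.
by rewrite pdegM.
Qed.

Lemma pdegD_le p q : (pdeg (p + q)%R <= maxn (pdeg p) (pdeg q))%N.
Proof.
rewrite /pdeg; have := msizeD_le p q.
case: (msize (p + q)) => //= a; case: (msize p) => [|b]; case: (msize q) => [|c] //=;
  rewrite ?maxn0 ?max0n //= => h; rewrite -ltnS; apply: leq_trans h _;
  by rewrite -maxnSS.
Qed.

Lemma pdegZ_le (a : R) p : (pdeg (a *: p)%R <= pdeg p)%N.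
Proof. by rewrite /pdeg -!subn1 leq_sub2r // msizeZ_le. Qed.

Lemma pdeg_sum_le (I : Type) (s : seq I) (P : pred I) (F : I -> polyT R T) k :
  (forall i, P i -> (pdeg (F i) <= k)%N) -> (pdeg (\sum_(i <- s | P i) F i)%R <= k)%N.
Proof.
move=> F_le; elim/big_rec: _ => [|i p Pi p_le]; first by rewrite pdeg0.
by apply: leq_trans (pdegD_le _ _) _; rewrite geq_max F_le.
Qed.

Lemma pdeg_prod_le (I : Type) (s : seq I) (P : pred I) (F : I -> polyT R T) :
  (pdeg (\prod_(i <- s | P i) F i)%R <= \sum_(i <- s | P i) pdeg (F i))%N.
Proof.
elim/big_rec2: _ => [|i k p Pi p_le]; first by rewrite pdeg1.
by apply: leq_trans (pdegM_le _ _) _; rewrite leq_add2l.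
Qed.

Lemma pdegX_le p k : (pdeg (p ^+ k)%R <= k * pdeg p)%N.
Proof.
elim: k => [|k IHk]; first by rewrite expr0 pdeg1.
by rewrite exprS; apply: leq_trans (pdegM_le _ _) _; rewrite mulSn leq_add2l.
Qed.

Lemma mdeg_le_pdeg p m : p@_m != 0 -> (mdeg m <= pdeg p)%N.
Proof.
rewrite -mcoeff_msupp => /msize_mdeg_lt; rewrite /pdeg; by case: (msize p).
Qed.

End TotalDegree.

Section Annihilation.
Variables (R : idomainType) (T : finType) (E : polyT R T -> R) (r : nat).
Hypothesis E_lin : linear_functional E.
Implicit Types f g q : polyT R T.

Lemma lfun0 : E 0 = 0.
Proof.
have := E_lin 1 0 0; rewrite scale1r !addr0 mul1r => E00.
by apply: (addrI (E 0)); rewrite addr0 -E00.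
Qed.

Lemma lfunD f g : E (f + g) = E f + E g.
Proof. by have := E_lin 1 f g; rewrite scale1r mul1r. Qed.

Lemma lfunZ a f : E (a *: f) = a * E f.
Proof. by have := E_lin a f 0; rewrite !addr0 lfun0 addr0. Qed.

Lemma lfunN f : E (- f) = - E f.
Proof. by rewrite -scaleN1r lfunZ mulN1r. Qed.

(* [f] acts on [E] like a hard constraint of degree [k]. *)
Definition annihilated k f := forall q, (pdeg q + k <= r)%N -> E (f * q) = 0.

Lemma annihilated0 k : annihilated k 0.
Proof. by move=> q _; rewrite mul0r lfun0. Qed.

Lemma annihilatedD k f g : annihilated k f -> annihilated k g -> annihilated k (f + g).
Proof. by move=> Af Ag q q_le; rewrite mulrDl lfunD Af // Ag // addr0. Qed.

Lemma annihilatedN k f : annihilated k f -> annihilated k (- f).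
Proof. by move=> Af q q_le; rewrite mulNr lfunN Af // oppr0. Qed.

Lemma annihilatedB k f g : annihilated k f -> annihilated k g -> annihilated k (f - g).
Proof. by move=> Af Ag; apply: annihilatedD => //; apply: annihilatedN. Qed.

Lemma annihilatedZ k a f : annihilated k f -> annihilated k (a *: f).
Proof. by move=> Af q q_le; rewrite -scalerAl lfunZ Af // mulr0. Qed.

Lemma annihilated_sum k (I : Type) (s : seq I) (P : pred I) (F : I -> polyT R T) :
  (forall i, P i -> annihilated k (F i)) -> annihilated k (\sum_(i <- s | P i) F i).
Proof.
move=> AF; elim/big_rec: _ => [|i f Pi Af]; first exact: annihilated0.
by apply: annihilatedD => //; apply: AF.
Qed.

Lemma annihilated_le k k' f : (k <= k')%N -> annihilated k f -> annihilated k' f.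
Proof. by move=> le_kk' Af q q_le; apply: Af; apply: leq_trans q_le; rewrite leq_add2l. Qed.

Lemma annihilatedMr k j f g : annihilated k f -> (pdeg g <= j)%N -> annihilated (k + j) (f * g).
Proof. by move=> Af g_le q q_le; rewrite -mulrA; apply: Af; have := pdegM_le g q; lia. Qed.

Lemma annihilatedMl k j f g : annihilated k f -> (pdeg g <= j)%N -> annihilated (k + j) (g * f).
Proof. by rewrite mulrC; apply: annihilatedMr. Qed.

Lemma annihilated_constraint k f :
  (forall q, (pdeg (f * q)%R <= r)%N -> E (f * q) = 0) -> (pdeg f <= k)%N -> annihilated k f.
Proof. by move=> Ef f_le q q_le; apply: Ef; have := pdegM_le f q; lia. Qed.

Lemma annihilated_idemM k1 k2 j1 j2 f g :
  annihilated k1 (f ^+ 2 - f) -> annihilated k2 (g ^+ 2 - g) ->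
  (pdeg f <= j1)%N -> (pdeg g <= j2)%N ->
  annihilated (maxn (k1 + 2 * j2) (k2 + j1)) ((f * g) ^+ 2 - f * g).
Proof.
move=> Af Ag f_le g_le.
have -> : (f * g) ^+ 2 - f * g = (f ^+ 2 - f) * g ^+ 2 + f * (g ^+ 2 - g) by ring.
apply: annihilatedD.
  apply: annihilated_le (leq_maxl _ _) _; apply: annihilatedMr => //.
  by apply: leq_trans (pdegX_le _ _) _; lia.
by apply: annihilated_le (leq_maxr _ _) _; apply: annihilatedMl.
Qed.

End Annihilation.

Section Substitution.
Variables (R : idomainType) (T U : finType) (F : T -> polyT R U).

Definition subst_tuple : #|T|.-tuple (polyT R U) := [tuple F (enum_val i) | i < #|T|].

Lemma comp_subst_ind t : comp_mpoly subst_tuple (ind R t) = F t.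
Proof. by rewrite /ind (@comp_mpolyXU _ R) -(tnth_nth 0) tnth_mktuple enum_rankK. Qed.

Lemma pdeg_comp_subst k p :
  (forall t, (pdeg (F t) <= k)%N) -> (pdeg (comp_mpoly subst_tuple p) <= k * pdeg p)%N.
Proof.
move=> F_le; rewrite comp_mpolyE big_seq; apply: pdeg_sum_le => m m_supp.
apply: leq_trans (pdegZ_le _ _) _; apply: leq_trans (pdeg_prod_le _ _ _) _.
apply: (@leq_trans (\sum_(i < #|T|) (m i * k))%N).
  apply: leq_sum => i _; apply: leq_trans (pdegX_le _ _) _.
  by rewrite leq_mul2l tnth_mktuple F_le orbT.
rewrite -big_distrl /= -mdegE mulnC leq_mul2l; apply/orP; right.
by have := msize_mdeg_lt m_supp; rewrite /pdeg; case: (msize p).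
Qed.

End Substitution.

Lemma mpolyCVn (R : fieldType) n k : (k%:R^-1 : {mpoly R[n]}) = (k%:R^-1)%:MP.
Proof. by rewrite -mpolyC_nat fmorphV. Qed.

Section SymmetricRelation.
Variables (V : finType) (e : rel V).

Definition narcs := #|[set p : V * V | e p.1 p.2]|.

Lemma sum_arcs (M : nmodType) (c : M) : \sum_u \sum_(u' | e u u') c = c *+ narcs.
Proof. by rewrite pair_big_dep /= -sumr_const; apply: eq_bigl => p; rewrite inE. Qed.

Hypotheses (e_sym : forall x y, e x y = e y x) (e_irr : irreflexive e).

(* Swapping the two ends of an arc pairs up the arcs going up in [enum_rank]
   with those going down. *)
Lemma narcs_even : ~~ odd narcs.
Proof.
pose sw (p : V * V) := (p.2, p.1).
have swK : involutive sw by case.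
set S := [set p : V * V | e p.1 p.2].
set B := [set p : V * V | (enum_rank p.1 < enum_rank p.2)%N].
have down_up : S :\: B = sw @: (S :&: B).
  rewrite (can2_imset_pre _ swK swK); apply/setP => -[a b]; rewrite !inE /=.
  rewrite e_sym; case eba: (e b a) => /=; last by rewrite andbF.
  have : enum_rank a != enum_rank b.
    by rewrite (inj_eq enum_rank_inj); apply: contraTneq eba => ->; rewrite e_irr.
  by rewrite -leqNgt; case: ltngtP => // /val_inj ->; rewrite eqxx.
have := cardsID B S; rewrite down_up card_imset; last exact: (can_inj swK).
by rewrite /narcs -/S => <-; rewrite addnn odd_double.
Qed.

End SymmetricRelation.

Definition parity (g : {ffun 'I_3 -> bool}) : bool :=
  g ord0 (+) g (@Ordinal 3 1 isT) (+) g (@Ordinal 3 2 isT).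

Lemma sat3E b g : sat3 b g = (parity g == b).
Proof. by []. Qed.

Definition xorf (f g : {ffun 'I_3 -> bool}) : {ffun 'I_3 -> bool} := [ffun i => f i (+) g i].

Lemma xorfC : commutative xorf.
Proof. by move=> f g; apply/ffunP => i; rewrite !ffunE addbC. Qed.

Lemma parity_xorf f g : parity (xorf f g) = parity f (+) parity g.
Proof.
rewrite /parity !ffunE.
by case: (f ord0); case: (f (Ordinal _)); case: (f (Ordinal _));
   case: (g ord0); case: (g (Ordinal _)); case: (g (Ordinal _)).
Qed.

Lemma xorf_inj f : injective (xorf f).
Proof. by move=> g g' /ffunP eqg; apply/ffunP => i; have := eqg i; rewrite !ffunE => /addbI. Qed.

Lemma sum_sat3_xorf (M : nmodType) (b b' : bool) f (G : {ffun 'I_3 -> bool} -> M) :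
  sat3 b f -> \sum_(g | sat3 b' g) G (xorf f g) = \sum_(g | sat3 (b (+) b') g) G g.
Proof.
rewrite [sat3 b f]sat3E => /eqP <-.
rewrite [RHS](reindex_inj (@xorf_inj f)) /=; apply: eq_bigl => g.
by rewrite !sat3E parity_xorf; case: (parity f); case: b'; case: (parity g).
Qed.

Lemma sum_pair_fst (I J : finType) (M : nmodType) (P : I -> pred J) (i0 : I)
    (G : I -> J -> M) :
  \sum_(p : I * J | P p.1 p.2) (if p.1 == i0 then G p.1 p.2 else 0) = \sum_(j | P i0 j) G i0 j.
Proof.
rewrite -(pair_big_dep xpredT P (fun i j => if i == i0 then G i j else 0)) /=.
rewrite (bigD1 i0) //= [X in _ + X]big1 ?addr0; first by apply: eq_bigr => j _; rewrite eqxx.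
by move=> i /negbTE ->; apply: big1.
Qed.

Section Coefficients.
Variables (R : nzRingType) (T : finType).

Lemma mcoeff_idem_ind (t : T) :
  ((ind R t) ^+ 2 - ind R t)@_(U_(enum_rank t) *+ 2) = 1.
Proof.
rewrite /ind mcoeffB mpolyXn !mcoeffX eqxx.
have -> : (U_(enum_rank t) == U_(enum_rank t) *+ 2)%MM = false.
  by apply/negP => /eqP /(congr1 mdeg); rewrite mdegMn mdeg1.
by rewrite subr0.
Qed.

Lemma mcoeff_row_ind (I J : finType) (u : I) (v0 : J) :
  (\sum_v ind R (u, v) - 1)@_(U_(enum_rank (u, v0))) = 1.
Proof.
rewrite mcoeffB mcoeff1 mnm1_eq0 subr0 raddf_sum /= (bigD1 v0) //= big1 ?addr0.
  by rewrite /ind mcoeffXU eqxx.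
by move=> v neq_v; rewrite /ind mcoeffXU (inj_eq enum_rank_inj) xpair_eqE eqxx (negbTE neq_v).
Qed.

Lemma mcoeff_col_ind (I J : finType) (u0 : I) (v : J) :
  (\sum_u ind R (u, v) - 1)@_(U_(enum_rank (u0, v))) = 1.
Proof.
rewrite mcoeffB mcoeff1 mnm1_eq0 subr0 raddf_sum /= (bigD1 u0) //= big1 ?addr0.
  by rewrite /ind mcoeffXU eqxx.
by move=> u neq_u; rewrite /ind mcoeffXU (inj_eq enum_rank_inj) xpair_eqE eqxx (negbTE neq_u).
Qed.

End Coefficients.

Lemma sum_cvert (C : finType) (rh : C -> bool) (M : nmodType)
    (F : C * {ffun 'I_3 -> bool} -> M) :
  \sum_(t : cvert rh) F (sval t) = \sum_(p | sat3 (rh p.1) p.2) F p.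
Proof. by rewrite (big_sub [pred p : C * {ffun 'I_3 -> bool} | sat3 (rh p.1) p.2]). Qed.

Section XorToIso.
Variables (R : realType) (X C : finType) (vars : C -> 'I_3 -> X) (rhs : C -> bool).
Variables (r : nat) (E : polyT R (X * bool)%type -> R).
Hypothesis E_xor : xor_pseudo_exp vars rhs r E.

Local Notation P := (polyT R (X * bool)%type).
Local Notation VG := (gvert X rhs).
Local Notation VH := (gvert X (@rhs0 C)).
Local Notation annihilated := (annihilated E r).

Lemma xor_lfun : linear_functional E.
Proof. by case: E_xor. Qed.

Definition xvar (x : X) (a : bool) : P := ind R (x, a).

Definition xmon (c : C) (g : {ffun 'I_3 -> bool}) : P :=
  \prod_(i < 3) xvar (vars c i) (g i).

Lemma pdeg_xvar x a : pdeg (xvar x a) = 1%N.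
Proof. exact: pdeg_ind. Qed.

Lemma pdeg_xmon c g : (pdeg (xmon c g) <= 3)%N.
Proof.
apply: leq_trans (pdeg_prod_le _ _ _) _.
by under eq_bigr do rewrite pdeg_xvar; rewrite sum_nat_const card_ord.
Qed.

Lemma xmon_split c g i :
  exists2 h, xmon c g = xvar (vars c i) (g i) * h & (pdeg h <= 2)%N.
Proof.
exists (\prod_(j < 3 | j != i) xvar (vars c j) (g j)); first by rewrite /xmon (bigD1 i).
apply: leq_trans (pdeg_prod_le _ _ _) _.
by under eq_bigr do rewrite pdeg_xvar; rewrite sum_nat_const cardC1 card_ord.
Qed.

Lemma annihilated_xvar_idem x a : annihilated 2 (xvar x a ^+ 2 - xvar x a).
Proof.
apply: annihilated_constraint; first by case: E_xor => _ [_ [idem _]]; apply: idem.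
apply: leq_trans (pdegD_le _ _) _; rewrite pdegN pdeg_xvar geq_max andbT.
by apply: leq_trans (pdegX_le _ _) _; rewrite pdeg_xvar.
Qed.

Lemma annihilated_xvar_total x a : annihilated 1 (xvar x (~~ a) + xvar x a - 1).
Proof.
have -> : xvar x (~~ a) + xvar x a = xvar x false + xvar x true.
  by case: a; rewrite // addrC.
apply: annihilated_constraint; first by case: E_xor => _ [_ [_ [total _]]]; apply: total.
apply: leq_trans (pdegD_le _ _) _; rewrite pdegN pdeg1 geq_max andbT.
by apply: leq_trans (pdegD_le _ _) _; rewrite !pdeg_xvar.
Qed.

Lemma annihilated_xor c : annihilated 3 (xor_poly R vars rhs c - 1).
Proof.
apply: annihilated_constraint; first by case: E_xor => _ [_ [_ [_ [xor _]]]]; apply: xor.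
apply: leq_trans (pdegD_le _ _) _; rewrite pdegN pdeg1 geq_max andbT.
by apply: pdeg_sum_le => g _; apply: pdeg_xmon.
Qed.

Lemma annihilated_xvar_compl x a : annihilated 2 (xvar x a * xvar x (~~ a)).
Proof.
have -> : xvar x a * xvar x (~~ a) =
    xvar x a * (xvar x (~~ a) + xvar x a - 1) - (xvar x a ^+ 2 - xvar x a) by ring.
apply: annihilatedB; first exact: xor_lfun.
  by apply: (annihilatedMl (k := 1) (j := 1)); [exact: annihilated_xvar_total | rewrite pdeg_xvar].
exact: annihilated_xvar_idem.
Qed.

Lemma annihilated_xvar_complM x a h :
  (pdeg h <= 4)%N -> annihilated 6 (xvar x a * xvar x (~~ a) * h).
Proof. exact: (annihilatedMr (annihilated_xvar_compl x a)). Qed.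

(* The indicator, as a function of the assignment [s], that the map induced by
   [s] sends [u] to [v]. *)
Definition pi_image (u : VG) (v : VH) : P :=
  match u, v with
  | inl p, inl p' => if p.1 == p'.1 then xvar p.1 (p.2 (+) p'.2) else 0
  | inr s, inr t => if (sval s).1 == (sval t).1
                    then xmon (sval s).1 (xorf (sval s).2 (sval t).2) else 0
  | _, _ => 0
  end.

Lemma pdeg_pi_image u v : (pdeg (pi_image u v) <= 3)%N.
Proof.
case: u => [p|s]; case: v => [p'|t] /=; rewrite ?pdeg0 //; case: ifP => _; rewrite ?pdeg0 //.
  by rewrite pdeg_xvar.
exact: pdeg_xmon.
Qed.

Lemma annihilated_pi_row u : annihilated 3 (\sum_v pi_image u v - 1).
Proof.
rewrite big_sumType /=; case: u => [[x a]|[[c g] sat_g]] /=.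
  rewrite [X in _ + X - _]big1 // addr0; under eq_bigr do rewrite eq_sym.
  rewrite (sum_pair_fst (fun _ _ => true) x (fun _ b => xvar x (a (+) b))) big_bool addbT addbF.
  by apply: annihilated_le (annihilated_xvar_total _ _).
rewrite big1 // add0r.
rewrite (sum_cvert _ (fun p => if c == p.1 then xmon c (xorf g p.2) else 0)).
under eq_bigr do rewrite eq_sym.
rewrite (sum_pair_fst (fun c' g' => sat3 (rhs0 c') g') c (fun _ g' => xmon c (xorf g g'))).
by rewrite (sum_sat3_xorf _ _ sat_g) /rhs0 addbF; apply: annihilated_xor.
Qed.

Lemma annihilated_pi_col v : annihilated 3 (\sum_u pi_image u v - 1).
Proof.
rewrite big_sumType /=; case: v => [[y b]|[[c g] sat_g]] /=.
  rewrite [X in _ + X - _]big1 // addr0.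
  rewrite (sum_pair_fst (fun _ _ => true) y (fun x a => xvar x (a (+) b))) big_bool /=.
  by apply: annihilated_le (annihilated_xvar_total _ _).
rewrite big1 // add0r.
rewrite (sum_cvert _ (fun p => if p.1 == c then xmon p.1 (xorf p.2 g) else 0)).
rewrite (sum_pair_fst (fun c' g' => sat3 (rhs c') g') c (fun c' g' => xmon c' (xorf g' g))).
under eq_bigr do rewrite xorfC.
by rewrite (sum_sat3_xorf _ _ sat_g); apply: annihilated_xor.
Qed.

Lemma annihilated_pi_idem u v : annihilated 6 (pi_image u v ^+ 2 - pi_image u v).
Proof.
have annihilated_zero k : annihilated k (0 ^+ 2 - 0 : P).
  by rewrite expr0n subr0; apply: (annihilated0 xor_lfun).
case: u => [p|s]; case: v => [p'|t] /=; try exact: annihilated_zero;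
  case: ifP => _; try exact: annihilated_zero.
  by apply: annihilated_le (annihilated_xvar_idem _ _).
rewrite /xmon !big_ord_recl big_ord0 mulr1.
apply: (annihilated_idemM xor_lfun (k1 := 2) (k2 := 4) (j1 := 1) (j2 := 2)).
- exact: annihilated_xvar_idem.
- apply: (annihilated_idemM xor_lfun (k1 := 2) (k2 := 2) (j1 := 1) (j2 := 1));
    by [exact: annihilated_xvar_idem | rewrite pdeg_xvar].
- by rewrite pdeg_xvar.
- by apply: leq_trans (pdegM_le _ _) _; rewrite !pdeg_xvar.
Qed.

Lemma annihilated_pi_nonedge_var_var x a x' a' y b y' b' :
  gadj vars (inl (x, a) : VG) (inl (x', a')) -> ~~ gadj vars (inl (y, b) : VH) (inl (y', b')) ->
  annihilated 6 (pi_image (inl (x, a)) (inl (y, b)) * pi_image (inl (x', a')) (inl (y', b'))).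
Proof.
rewrite /= => /andP [/eqP <- neq_a] nonedge.
have [eq_xy|_] := eqVneq x y; last by rewrite /= mul0r; apply: (annihilated0 xor_lfun).
subst y.
have [eq_xy'|_] := eqVneq x y'; last by rewrite /= mulr0; apply: (annihilated0 xor_lfun).
subst y'.
move: nonedge; rewrite eqxx negbK => /eqP <-.
have -> : a' = ~~ a by move: neq_a; case: a; case: a'.
by rewrite addNb -[_ * _]mulr1; apply: annihilated_xvar_complM; rewrite pdeg1.
Qed.

Lemma annihilated_pi_nonedge_var_con x a s y b t :
  gadj vars (inl (x, a) : VG) (inr s) -> ~~ gadj vars (inl (y, b) : VH) (inr t) ->
  annihilated 6 (pi_image (inl (x, a)) (inl (y, b)) * pi_image (inr s) (inr t)).
Proof.
case: s => [[c g] sat_g]; case: t => [[c' g'] sat_g'] /=.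
move=> /existsP [i /andP [/eqP var_i /eqP g_i]] nonedge.
have [eq_xy|_] := eqVneq x y; last by rewrite /= mul0r; apply: (annihilated0 xor_lfun).
subst y.
have [eq_cc'|_] := eqVneq c c'; last by rewrite /= mulr0; apply: (annihilated0 xor_lfun).
subst c'.
have g'_i : g' i != b.
  by apply: contra nonedge => /eqP g'_b; apply/existsP; exists i; rewrite var_i g'_b !eqxx.
have [h -> h_le] := xmon_split c (xorf g g') i.
have -> : xorf g g' i = ~~ (a (+) b).
  by rewrite ffunE g_i -addbN; congr (_ (+) _); move: g'_i; clear nonedge; case: (g' i); case: b.
by rewrite var_i mulrA; apply: annihilated_xvar_complM; apply: leq_trans h_le _.
Qed.

Lemma annihilated_pi_nonedge_con_con s s' t t' :
  gadj vars (inr s : VG) (inr s') -> ~~ gadj vars (inr t : VH) (inr t') ->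
  annihilated 6 (pi_image (inr s) (inr t) * pi_image (inr s') (inr t')).
Proof.
case: s s' t t' => [[c g] _] [[c1 g1] _] [[c' g'] _] [[c1' g1'] _] /=.
move=> /andP [/eqP <- neq_g] nonedge.
have [eq_cc'|_] := eqVneq c c'; last by rewrite /= mul0r; apply: (annihilated0 xor_lfun).
subst c'.
have [eq_cc1'|_] := eqVneq c c1'; last by rewrite /= mulr0; apply: (annihilated0 xor_lfun).
subst c1'.
move: nonedge; rewrite eqxx negbK => /eqP <-.
have [i neq_gi] : exists i, g i != g1 i.
  apply/existsP; apply: contraR neq_g; rewrite negb_exists => /forallP eq_g.
  by apply/eqP/ffunP => i; apply/eqP; rewrite -[_ == _]negbK eq_g.
have [h -> h_le] := xmon_split c (xorf g g') i.
have [h1 -> h1_le] := xmon_split c (xorf g1 g') i.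
rewrite !ffunE.
have -> : g1 i = ~~ g i by move: neq_gi; case: (g i); case: (g1 i).
rewrite addNb.
have -> : forall p q h1 h2 : P, p * h1 * (q * h2) = p * q * (h1 * h2) by move=> *; ring.
apply: annihilated_xvar_complM; apply: leq_trans (pdegM_le _ _) _.
by rewrite -[4%N]/(2 + 2)%N leq_add.
Qed.

(* An edge of [G_C] sent to a non-edge of [G_C0] forces some variable to take
   both values, i.e. the product contains [A[x |-> a] A[x |-> ~~ a]]. *)
Lemma annihilated_pi_nonedge u u' v v' : gadj vars u u' -> ~~ gadj vars v v' ->
  annihilated 6 (pi_image u v * pi_image u' v').
Proof.
case: u => [[x a]|s]; case: u' => [[x' a']|s'];
case: v => [[y b]|t]; case: v' => [[y' b']|t'];
  try by move=> _ _; rewrite /= ?mul0r ?mulr0; apply: (annihilated0 xor_lfun).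
- exact: annihilated_pi_nonedge_var_var.
- exact: annihilated_pi_nonedge_var_con.
- by move=> edge nonedge; rewrite mulrC; apply: annihilated_pi_nonedge_var_con edge nonedge.
- exact: annihilated_pi_nonedge_con_con.
Qed.

(* Over all pairs [(v, v')] the sum factors through the row sums, which are
   [1] modulo the constraints; the non-edges [(v, v')] contribute nothing. *)
Lemma annihilated_pi_edge u u' : gadj vars u u' ->
  annihilated 6 (\sum_v \sum_(v' | gadj vars v v') (pi_image u v * pi_image u' v') - 1).
Proof.
move=> edge.
have split_nonedges : \sum_v \sum_(v' | gadj vars v v') (pi_image u v * pi_image u' v') =
    \sum_v pi_image u v * \sum_v' pi_image u' v'
    - \sum_v \sum_(v' | ~~ gadj vars v v') (pi_image u v * pi_image u' v').
  rewrite -sumrB; apply: eq_bigr => v _.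
  by rewrite mulr_sumr [X in X - _](bigID (gadj vars v)) /= addrK.
have split_rows : \sum_v pi_image u v * \sum_v' pi_image u' v' =
    \sum_v pi_image u v * (\sum_v' pi_image u' v' - 1) + \sum_v pi_image u v.
  by rewrite -big_split /=; apply: eq_bigr => v _; rewrite mulrBr mulr1 subrK.
rewrite split_nonedges split_rows.
have -> : forall p q s : P, p + q - s - 1 = p + (q - 1) - s by move=> *; ring.
apply: annihilatedB; first exact: xor_lfun.
  apply: annihilatedD; first exact: xor_lfun.
    apply: (annihilated_sum xor_lfun) => v _.
    exact: annihilatedMl (annihilated_pi_row u') (pdeg_pi_image u v).
  exact: annihilated_le (annihilated_pi_row u).
apply: (annihilated_sum xor_lfun) => v _; apply: (annihilated_sum xor_lfun) => v' nonedge.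
exact: annihilated_pi_nonedge.
Qed.

Lemma gadj_sym (rh : C -> bool) (u v : gvert X rh) : gadj vars u v = gadj vars v u.
Proof.
case: u => [[x a]|s]; case: v => [[y b]|t] //=.
  by rewrite (eq_sym x) (eq_sym a).
by rewrite (eq_sym (sval s).1) (eq_sym (sval s).2).
Qed.

Lemma gadj_irr (rh : C -> bool) : irreflexive (gadj vars (rhs := rh)).
Proof. by case=> [[x a]|s] /=; rewrite !eqxx ?andbF. Qed.

Definition vertex_var (rh : C -> bool) (u : gvert X rh) : X :=
  match u with inl p => p.1 | inr s => vars (sval s).1 ord0 end.

Local Notation eG := (gadj vars (rhs := rhs)).
Local Notation eH := (gadj vars (rhs := @rhs0 C)).
Local Notation VV := (VG * VH)%type.
Local Notation Q := (polyT R VV).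

Lemma narcs_pos : (0 < narcs eG)%N -> (0 < narcs eH)%N.
Proof.
rewrite !card_gt0 => /set0Pn [[u _] _]; apply/set0Pn.
by exists (inl (vertex_var u, false), inl (vertex_var u, true)); rewrite inE /= eqxx.
Qed.

Definition edge_poly : Q := 2%:R^-1 * \sum_(u : VG) \sum_(u' : VG | eG u u')
  \sum_(v : VH) \sum_(v' : VH | eH v v') (ind R ((u, v) : VV) * ind R ((u', v') : VV)).

Lemma mcoeff_edge_poly m : mdeg m != 2%N -> edge_poly@_m = 0.
Proof.
move=> m_neq2; rewrite /edge_poly mpolyCVn mcoeffCM; apply/eqP; rewrite mulf_eq0; apply/orP; right.
rewrite !raddf_sum; apply/eqP/big1 => u _; rewrite raddf_sum; apply: big1 => u' _.
rewrite raddf_sum; apply: big1 => v _; rewrite raddf_sum; apply: big1 => v' _.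
rewrite /= /ind -mpolyXD mcoeffX; case: eqP => // m_eq; move: m_neq2.
by rewrite -m_eq mdegD !mdeg1.
Qed.

Lemma meval_edge_poly : meval (fun _ => 1) edge_poly = 2^-1 * (1 *+ narcs eH *+ narcs eG).
Proof.
rewrite /edge_poly mevalM mpolyCVn mevalC -!sum_arcs; congr (_ * _).
rewrite raddf_sum; apply: eq_bigr => u _; rewrite raddf_sum; apply: eq_bigr => u' _.
rewrite raddf_sum; apply: eq_bigr => v _; rewrite raddf_sum; apply: eq_bigr => v' _.
by rewrite /= mevalM /ind !mevalXU mulr1.
Qed.

Lemma pdeg_edge_constraint :
  edge_poly - ((narcs eG)./2)%:R != 0 -> (2 <= pdeg (edge_poly - ((narcs eG)./2)%:R)%R)%N.
Proof.
move=> neq0; rewrite leqNgt; apply/negP => deg_lt2.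
have edge_poly0 : edge_poly = 0.
  apply/mpolyP => m; rewrite mcoeff0.
  have [m2|] := eqVneq (mdeg m) 2%N; last exact: mcoeff_edge_poly.
  have : (edge_poly - ((narcs eG)./2)%:R)@_m = 0.
    by apply/eqP; apply: contraTT deg_lt2 => /mdeg_le_pdeg; rewrite m2 -leqNgt.
  by rewrite mcoeffB -mpolyC_nat mcoeffC -mdeg_eq0 m2 mulr0 subr0.
move: neq0; rewrite edge_poly0 sub0r oppr_eq0 => half_neq0.
have arcsG_pos : (0 < narcs eG)%N by rewrite lt0n; apply: contraNneq half_neq0 => ->.
have arcsH_pos := narcs_pos arcsG_pos.
have /esym/eqP := meval_edge_poly; rewrite edge_poly0 meval0.
rewrite mulf_eq0 invr_eq0 pnatr_eq0 /= -mulrnA -[1 *+ _]/((_ * _)%N%:R) pnatr_eq0 muln_eq0.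
by rewrite !eqn0Ngt arcsG_pos arcsH_pos.
Qed.

Definition pi_entry (t : VV) : P := pi_image t.1 t.2.

Local Notation pi_subst := (comp_mpoly (subst_tuple pi_entry)).

Lemma pdeg_pi_subst p : (pdeg (pi_subst p) <= 3 * pdeg p)%N.
Proof. by apply: pdeg_comp_subst => t; apply: pdeg_pi_image. Qed.

Lemma pi_subst_ind u v : pi_subst (ind R ((u, v) : VV)) = pi_image u v.
Proof. exact: comp_subst_ind. Qed.

Lemma annihilated_edge_constraint :
  annihilated 6 (pi_subst edge_poly - ((narcs eG)./2)%:R).
Proof.
have half_arcs : 2%:R^-1 *: (narcs eG)%:R = ((narcs eG)./2)%:R :> P.
  rewrite -mul_mpolyC -!mpolyC_nat -mpolyCM; congr (_%:MP).
  rewrite -[in LHS](even_halfK (narcs_even (@gadj_sym rhs) (@gadj_irr rhs))).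
  by rewrite -muln2 natrM mulrCA mulVf ?mulr1 // pnatr_eq0.
rewrite /edge_poly mpolyCVn mul_mpolyC comp_mpolyZ.
rewrite (_ : pi_subst _ = \sum_u \sum_(u' | eG u u')
    (\sum_v \sum_(v' | eH v v') (pi_image u v * pi_image u' v') - 1)
    + \sum_u \sum_(u' | eG u u') 1).
  by rewrite sum_arcs scalerDr half_arcs addrK; apply: (annihilatedZ xor_lfun);
    do 2!apply: (annihilated_sum xor_lfun) => ? ?; apply: annihilated_pi_edge.
rewrite -big_split /= rmorph_sum; apply: eq_bigr => u _.
rewrite -big_split /= rmorph_sum; apply: eq_bigr => u' _; rewrite subrK.
rewrite rmorph_sum; apply: eq_bigr => v _; rewrite rmorph_sum; apply: eq_bigr => v' _.
by rewrite rmorphM /= !pi_subst_ind.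
Qed.

Section DegreeBound.
Variables (d : nat) (le_3d_r : (3 * d <= r)%N).

(* Substitution at most triples degrees, which is what forces [d <= r / 3]. *)
Lemma E_subst_constraint f q k :
  annihilated (3 * k) (pi_subst f) -> (k <= pdeg f)%N -> f != 0 ->
  (pdeg (f * q)%R <= d)%N -> E (pi_subst (f * q)) = 0.
Proof.
move=> Af le_k f_neq0; have [->|q_neq0] := eqVneq q 0.
  by rewrite mulr0 rmorph0 (lfun0 xor_lfun).
rewrite pdegM // rmorphM /= => le_d; apply: Af.
by apply: leq_trans (leq_add (pdeg_pi_subst q) (leqnn (3 * k))) _; lia.
Qed.

Lemma E_subst_constraint_mcoeff f q m k :
  annihilated (3 * k) (pi_subst f) -> f@_m = 1 -> (k <= mdeg m)%N ->
  (pdeg (f * q)%R <= d)%N -> E (pi_subst (f * q)) = 0.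
Proof.
move=> Af coef1 le_k; have coef_neq0 : f@_m != 0 by rewrite coef1 oner_neq0.
apply: E_subst_constraint Af (leq_trans le_k (mdeg_le_pdeg coef_neq0)) _.
by apply: contraNneq coef_neq0 => ->; rewrite mcoeff0.
Qed.

Lemma iso_pseudo_exp_subst : iso_pseudo_exp eG eH d (fun p => E (pi_subst p)).
Proof.
have [E_lin [E1 [_ [_ [_ E_psd]]]]] := E_xor.
split; first by move=> a p q; rewrite rmorphD /= comp_mpolyZ; apply: E_lin.
split; first by rewrite rmorph1.
split.
  move=> u v q.
  apply: (E_subst_constraint_mcoeff (k := 2) _ (mcoeff_idem_ind R ((u, v) : VV))).
  - by rewrite rmorphB rmorphXn /= pi_subst_ind; apply: annihilated_pi_idem.
  - by rewrite mdegMn mdeg1.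
split.
  move=> u q; pose v0 : VH := inl (vertex_var u, false).
  apply: (E_subst_constraint_mcoeff (k := 1) _ (mcoeff_row_ind R u v0)).
  - rewrite rmorphB rmorph_sum rmorph1 /=; under eq_bigr do rewrite pi_subst_ind.
    exact: annihilated_pi_row.
  - by rewrite mdeg1.
split.
  move=> v q; pose u0 : VG := inl (vertex_var v, false).
  apply: (E_subst_constraint_mcoeff (k := 1) _ (mcoeff_col_ind R u0 v)).
  - rewrite rmorphB rmorph_sum rmorph1 /=; under eq_bigr do rewrite pi_subst_ind.
    exact: annihilated_pi_col.
  - by rewrite mdeg1.
split.
  move=> p; rewrite -/edge_poly.
  have [->|neq0] := eqVneq (edge_poly - ((narcs eG)./2)%:R) 0.
    by rewrite mul0r rmorph0 (lfun0 xor_lfun).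
  move=> le_d; rewrite (E_subst_constraint (k := 2)) ?pdeg_edge_constraint //.
  by rewrite rmorphB rmorph_nat; apply: annihilated_edge_constraint.
move=> p le_d; rewrite rmorphXn /=; apply: E_psd.
apply: leq_trans (leq_mul (leqnn 2) (pdeg_pi_subst p)) _.
by rewrite mulnCA (leq_trans _ le_3d_r) // leq_mul2l le_d orbT.
Qed.

End DegreeBound.
End XorToIso.

(* The variables of an equation need not be distinct for this argument. *)
Theorem lemma4p2 (R : realType) (X C : finType)
  (vars : C -> 'I_3 -> X) (rhs : C -> bool) (r : nat) :
  (forall c, injective (vars c)) ->
  (exists E : polyT R (X * bool)%type -> R, xor_pseudo_exp vars rhs r E) ->
  forall d : nat, (3 * d <= r)%N ->
  exists E' : polyT R (gvert X rhs * gvert X (@rhs0 C))%type -> R,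
    iso_pseudo_exp (gadj vars (rhs:=rhs)) (gadj vars (rhs:=@rhs0 C)) d E'.
Proof.
move=> _ [E E_xor] d le_3d_r.
by eexists; exact: (iso_pseudo_exp_subst E_xor le_3d_r).
Qed.
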